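(* Let ${\cal M}$ be a multiset of strings over $\Sigma$, let $L=\mathrm{colexBWT}({\cal M})$, and let $r_{OPT}$ be the minimum of $\mathrm{runs}(L')$ over all separator-based BWTs $L'$ of ${\cal M}$. Then $\mathrm{runs}(L)\le r_{OPT}+2c_{\cal M}$, where $c_{\cal M}$ is the number of interesting intervals of ${\cal M}$.
   Context: A run is a maximal substring consisting of one repeated character; $\mathrm{runs}(T)$ is the number of runs of $T$. $\Sigma$ is a finite ordered alphabet; $\#<\$<$ every character of $\Sigma$ and $\$_1<\cdots<\$_k<$ every character of $\Sigma$. $\mathrm{BWT}(T)$ is the concatenation of the last characters of the lexicographically sorted rotations of $T$. Omega-order: writing $S=\mathrm{root}(S)^{\exp(S)}$ with $\mathrm{root}(S)$ primitive, $S\prec_\omega T$ iff either $\mathrm{root}(S)=\mathrm{root}(T)$ and $\exp(S)<\exp(T)$, or $S^\omega<_{\mathrm{lex}}T^\omega$; $\mathrm{eBWT}$ of a multiset is the concatenation of last characters of all rotations of all its strings sorted in omega-order. For ${\cal M}=\{T_1,\ldots,T_k\}$ and a listing $(T_{\pi(1)},\ldots,T_{\pi(k)})$, the separator-based BWTs are: $\mathrm{dolEBWT}({\cal M})=\mathrm{eBWT}(\{T_i\$\})$; the mdolBWT of the listing, $\mathrm{BWT}(T_{\pi(1)}\$_1\cdots T_{\pi(k)}\$_k)$ with each $\$_j$ renamed $\$$; the concBWT of the listing, $\mathrm{BWT}(T_{\pi(1)}\$\cdots T_{\pi(k)}\$\#)$ with first character removed and $\#$ renamed $\$$; and $\mathrm{colexBWT}({\cal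 M})$, the mdolBWT of the listing of ${\cal M}$ in colexicographic order ($S<_{\mathrm{colex}}T$ iff reverse of $S$ $<_{\mathrm{lex}}$ reverse of $T$). Interesting intervals: with ${\cal R}$ the multiset of all rotations of the $T_i\$$ in lexicographic order, for $U\in\Sigma^*$ a suffix of at least two $T_i$ let $b=1+|\{R\in{\cal R}:R<_{\mathrm{lex}}U\$,\ U\$\text{ not a prefix of }R\}|$ and $e=b-1+|\{i:U\text{ suffix of }T_i\}|$; the character preceding the suffix occurrence of $U$ in $T_i$ is the one cyclically before it in $T_i\$$ ($\$$ if $U=T_i$); $[b,e]$ is interesting if some $i\neq j$ have $U$ as a suffix with different preceding characters. *)

From HB Require Import structures.
From mathcomp Require Import all_boot all_order.

Set Implicit Arguments.
Unset Strict Implicit.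
Unset Printing Implicit Defensive.

Import Order.TTheory.

(* Extended alphabet: # (Hash), separators $_j (Dol j; plain $ is Dol 0),
   and the characters of Sigma (Ch a).
   Order: Hash < Dol i < Dol j (i < j) < Ch a, with Ch ordered as Sigma. *)
Inductive xchar (A : Type) := Hash | Dol of nat | Ch of A.
Arguments Hash {A}.
Arguments Dol {A}.
Arguments Ch {A}.

Section XcharCount.
Variable A : countType.
Definition xcode (c : xchar A) : option (nat + A) :=
  match c with Hash => None | Dol n => Some (inl n) | Ch a => Some (inr a) end.
Definition xdecode (o : option (nat + A)) : xchar A :=
  match o with None => Hash | Some (inl n) => Dol n | Some (inr a) => Ch a end.
Lemma xcodeK : cancel xcode xdecode. Proof. by case. Qed.
End XcharCount.

HB.instance Definition _ (A : countType) :=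
  Countable.copy (xchar A) (can_type (@xcodeK A)).

Section Defs.
Context {d : Order.disp_t} (A : finOrderType d).

Notation X := (xchar A).

Definition xlt (x y : X) : bool :=
  match x, y with
  | Hash, Hash => false
  | Hash, _ => true
  | Dol _, Hash => false
  | Dol i, Dol j => (i < j)%N
  | Dol _, Ch _ => true
  | Ch _, Hash => false
  | Ch _, Dol _ => false
  | Ch a, Ch b => (a < b)%O
  end.

Fixpoint lexle (s t : seq X) : bool :=
  match s, t with
  | [::], _ => true
  | _ :: _, [::] => false
  | x :: s', y :: t' => xlt x y || ((x == y) && lexle s' t')
  end.
Definition lexlt (s t : seq X) : bool := lexle s t && (s != t).

Fixpoint runs (s : seq X) : nat :=
  match s with
  | [::] => 0
  | x :: t => match t with
              | [::] => 1
              | y :: _ => (x != y) + runs t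
              end
  end.

Definition rotations {T : Type} (s : seq T) : seq (seq T) :=
  [seq rot i s | i <- iota 0 (size s)].

Definition BWT (s : seq X) : seq X :=
  [seq last Hash R | R <- sort lexle (rotations s)].

Definition lift (T : seq A) : seq X := map Ch T.

Definition ren_dol (c : X) : X := match c with Dol _ => Dol 0 | _ => c end.
Definition ren_hash (c : X) : X := match c with Hash => Dol 0 | _ => c end.

Fixpoint mdol_str (l : seq (seq A)) (j : nat) : seq X :=
  match l with
  | [::] => [::]
  | T :: l' => lift T ++ Dol j :: mdol_str l' j.+1
  end.

Definition mdolBWT (l : seq (seq A)) : seq X := map ren_dol (BWT (mdol_str l 1)).

Definition conc_str (l : seq (seq A)) : seq X :=
  flatten [seq lift T ++ [:: Dol 0] | T <- l] ++ [:: Hash].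
Definition concBWT (l : seq (seq A)) : seq X :=
  map ren_hash (behead (BWT (conc_str l))).

Definition primitive (s : seq X) : Prop :=
  forall (p : seq X) (k : nat), s = flatten (nseq k p) -> k = 1%N.
Definition root_exp (S1 p : seq X) (k : nat) : Prop :=
  primitive p /\ S1 = flatten (nseq k p).
Definition oword (S1 : seq X) (n : nat) : X := nth Hash S1 (n %% size S1).
Definition omega_lex_lt (S1 T1 : seq X) : Prop :=
  exists n, (forall m, (m < n)%N -> oword S1 m = oword T1 m) /\ xlt (oword S1 n) (oword T1 n).
Definition omega_lt (S1 T1 : seq X) : Prop :=
  (exists p k1 k2, root_exp S1 p k1 /\ root_exp T1 p k2 /\ (k1 < k2)%N)
  \/ omega_lex_lt S1 T1.

Definition is_eBWT (Ms : seq (seq X)) (L : seq X) : Prop :=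
  exists rs : seq (seq X),
    perm_eq rs (flatten [seq rotations S1 | S1 <- Ms]) /\
    (forall i j, (i < j < size rs)%N -> ~ omega_lt (nth [::] rs j) (nth [::] rs i)) /\
    L = [seq last Hash R | R <- rs].

Definition dolstr (T : seq A) : seq X := lift T ++ [:: Dol 0].

Definition is_dolEBWT (M : seq (seq A)) (L : seq X) : Prop :=
  is_eBWT [seq dolstr T | T <- M] L.

Definition sepBWT (M : seq (seq A)) (L : seq X) : Prop :=
  is_dolEBWT M L \/
  (exists l, perm_eq l M /\ L = mdolBWT l) \/
  (exists l, perm_eq l M /\ L = concBWT l).

Definition colexle (S1 T1 : seq A) : bool := lexle (rev (lift S1)) (rev (lift T1)).
Definition colexBWT (M : seq (seq A)) : seq X := mdolBWT (sort colexle M).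

Definition allrots (M : seq (seq A)) : seq (seq X) :=
  flatten [seq rotations (dolstr T) | T <- M].

(* character cyclically preceding the suffix occurrence of U in T$ *)
Definition prec_char (U T : seq A) : X :=
  match rev (take (size T - size U) T) with
  | [::] => Dol 0
  | a :: _ => Ch a
  end.

Definition int_b (M : seq (seq A)) (U : seq A) : nat :=
  (count (fun R => lexlt R (dolstr U) && ~~ prefix (dolstr U) R) (allrots M)).+1.
Definition int_e (M : seq (seq A)) (U : seq A) : nat :=
  (int_b M U).-1 + count (suffix U) M.

Definition interestingU (M : seq (seq A)) (U : seq A) : bool :=
  (1 < count (suffix U) M)%N &&
  [exists i : 'I_(size M), exists j : 'I_(size M),
     [&& i != j, suffix U (nth [::] M i), suffix U (nth [::] M j) &
         prec_char U (nth [::] M i) != prec_char U (nth [::] M j)]].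

(* all suffixes of strings of M: the only candidates for U *)
Definition cands (M : seq (seq A)) : seq (seq A) :=
  undup (flatten [seq [seq drop k T | k <- iota 0 (size T).+1] | T <- M]).

Definition c_M (M : seq (seq A)) : nat :=
  size (undup [seq (int_b M U, int_e M U) | U <- cands M & interestingU M U]).

End Defs.

From Pilot Require Import Defs.
From mathcomp Require Import all_boot all_order zify.

Set Implicit Arguments.
Unset Strict Implicit.
Unset Printing Implicit Defensive.

Import Order.TTheory.

(* Every separator-based BWT of M lists, once for each suffix V of each string T
   of M, the character preceding V in T$, and it lists these entries sorted by the
   key V$: separators are smaller than letters, so the rotations beginning with V
   followed by a separator are contiguous.  The variants differ only in the order
   inside each group of equal keys.  In the colexBWT the separators $_1 < $_2 < ...
   order each group as the strings are listed, i.e. colexicographically, so the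
   preceding characters of a group come out sorted and form as few runs as
   possible.  Reordering one group changes the number of runs by at most two, and
   only groups with two distinct preceding characters can be reordered; such a
   group is an interesting interval, and distinct keys give distinct intervals. *)

(** * Lexicographic order and runs *)

Section ExtendedAlphabet.
Context {d : Order.disp_t} {A : finOrderType d}.
Local Notation X := (xchar A).
Local Notation lex := (@lexle _ A).
Implicit Types (x y z : X) (s t u : seq X).

Lemma xlt_irr x : xlt x x = false.
Proof. by case: x => //= *; rewrite ?ltnn ?ltxx. Qed.

Lemma xlt_trans y x z : xlt x y -> xlt y z -> xlt x z.
Proof.
case: x => [|m|a]; case: y => [|n|b]; case: z => [|p|c] //=.
- exact: ltn_trans.
- exact: lt_trans.
Qed.

Lemma xlt_asym x y : xlt x y -> xlt y x -> False.
Proof. by move=> h1 h2; have := xlt_trans h1 h2; rewrite xlt_irr. Qed.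

Lemma xlt_total x y : x != y -> xlt x y || xlt y x.
Proof.
case: x => [|m|a]; case: y => [|n|b] //=; rewrite ?eqxx // => ne.
- by rewrite -neq_ltn; apply: contra_neq ne => ->.
- by rewrite -neq_lt; apply: contra_neq ne => ->.
Qed.

Lemma xlt_Hash x : xlt x Hash = false.
Proof. by case: x. Qed.

Definition xle x y := (x == y) || xlt x y.

Lemma xle_Hash x : xle Hash x.
Proof. by case: x. Qed.

Lemma lexle_refl : reflexive lex.
Proof. by elim=> //= x s ->; rewrite eqxx orbT. Qed.

Lemma lexle_trans : transitive lex.
Proof.
move=> t s u; elim: s t u => [|x s IH] [|y t] [|z u] //=.
case/orP=> [h1|/andP[/eqP<- h1]]; case/orP=> [h2|/andP[/eqP<- h2]].
- by rewrite (xlt_trans h1 h2).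
- by rewrite h1.
- by rewrite h2.
- by rewrite eqxx (IH _ _ h1 h2) orbT.
Qed.

Lemma lexle_total : total lex.
Proof.
elim=> [|x s IH] [|y t] //=.
case: (eqVneq x y) => [->|ne]; first by rewrite xlt_irr /= IH.
by case/orP: (xlt_total ne) => ->; rewrite ?orbT.
Qed.

Lemma lexle_anti : antisymmetric lex.
Proof.
move=> s t /andP[]; elim: s t => [|x s IH] [|y t] //=.
case/orP=> [h1|/andP[/eqP<- h1]]; case/orP=> [h2|/andP[/eqP e h2]].
- by case: (xlt_asym h1 h2).
- by move: h1; rewrite e xlt_irr.
- by move: h2; rewrite xlt_irr.
- by rewrite (IH _ h1 h2).
Qed.

Lemma lexle_catl p s t : lex (p ++ s) (p ++ t) = lex s t.
Proof. by elim: p => [|x p IH] //=; rewrite xlt_irr eqxx IH. Qed.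

Lemma prefix_lexle s t : prefix s t -> lex s t.
Proof.
elim: s t => [|x s IH] [|y t] //=.
by case/andP => /eqP <- /IH ->; rewrite eqxx orbT.
Qed.

Lemma lexle_gt_witness s t : ~~ lex s t -> prefix t s \/
  exists n, [/\ n < size t, n < size s,
     (forall m, m < n -> nth Hash s m = nth Hash t m) & xlt (nth Hash t n) (nth Hash s n)].
Proof.
elim: s t => [|x s IH] [|y t] //=; first by left.
case: (eqVneq x y) => [<-|ne].
- rewrite xlt_irr /= => /IH [h|[n [h1 h2 h3 h4]]]; first by left.
  by right; exists n.+1; split => // -[|m] //= /h3.
- rewrite /= orbF => hn; right; exists 0; split => //.
  by have := xlt_total ne; rewrite (negbTE hn).
Qed.

Lemma lexle_cat_nprefix s t u : lex s t -> ~~ prefix s t ->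
  lex (s ++ u) t && ~~ prefix t (s ++ u).
Proof.
elim: s t => [|x s IH] [|y t] //=.
case/orP => [h|/andP[/eqP <- h]].
- move=> _; rewrite h /=; apply/negP => /andP[/eqP e _].
  by move: h; rewrite e xlt_irr.
- by rewrite eqxx /= xlt_irr /= => /(IH _ h) /andP[-> ->].
Qed.

Lemma sort_lexle_pairwise (rs : seq (seq X)) : pairwise lex (sort lex rs).
Proof.
rewrite -sorted_pairwise; first exact: (sort_sorted lexle_total).
exact: lexle_trans.
Qed.

Lemma pairwise_xle_xlt (Y : Type) (f : Y -> X) (s : seq Y) :
  pairwise (fun a b => xle (f a) (f b)) s -> uniq (map f s) ->
  pairwise (fun a b => xlt (f a) (f b)) s.
Proof.
elim: s => [|x s IH] //= /andP[ha hp] /andP[hn hu]; rewrite IH // andbT.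
elim: s {IH hp hu} ha hn => [|y s IH] //= /andP[h1 h2].
rewrite in_cons negb_or => /andP[ne hn].
by rewrite IH // andbT; move: h1; rewrite /xle (negbTE ne).
Qed.

Lemma runs_cat_le s t : runs (s ++ t) <= runs s + runs t.
Proof.
elim: s => [|x s IH] //=.
case: s IH => [|y s] IH /=.
- by case: t {IH} => [|z t] //=; rewrite leq_add2r leq_b1.
- by rewrite -addnA leq_add2l.
Qed.

Lemma runs_cat_ge s t : runs s + runs t <= runs (s ++ t) + 1.
Proof.
elim: s => [|x s IH] //=; first by rewrite addn1.
case: s IH => [|y s] IH /=.
- by case: t {IH} => [|z t] //=; rewrite addnC leq_add2r leq_addl.
- by rewrite -!addnA leq_add2l.
Qed.

Lemma size_undup_le_runs s : size (undup s) <= runs s.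
Proof.
elim: s => [|x s IH] //=.
case: s IH => [|y s] IH //=.
case: ifP => hx; case: (eqVneq x y) => [exy|nxy] /=.
- by move: IH; rewrite /= -exy.
- exact: leq_trans IH (leq_addl _ _).
- by move: hx; rewrite exy mem_head.
- by rewrite add1n ltnS.
Qed.

(* In an [xle]-sorted sequence each letter forms a single run. *)
Lemma runs_le_size_undup s : pairwise xle s -> runs s <= size (undup s).
Proof.
elim: s => [|x s IH] //=.
case: s IH => [|y s] IH //= /andP[/andP[hxy hxs] hp].
have {}IH := IH hp.
case: (eqVneq x y) => [exy|nxy] /=; first by rewrite exy mem_head.
have hn : x \notin y :: s.
  rewrite in_cons negb_or nxy /=; apply/negP => xs.
  move: hp => /= /andP[/allP /(_ x xs) hyx _].
  move: hxy hyx; rewrite /xle (negbTE nxy) eq_sym (negbTE nxy) /=.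
  exact: xlt_asym.
by rewrite (negbTE hn) /= add1n ltnS.
Qed.

Lemma runs_pairwise_le_perm s t : pairwise xle s -> perm_eq s t -> runs s <= runs t.
Proof.
move=> hs p; apply: leq_trans (runs_le_size_undup hs) _.
have -> : size (undup s) = size (undup t).
  apply/perm_size/uniq_perm; rewrite ?undup_uniq // => z.
  by rewrite !mem_undup (perm_mem p).
exact: size_undup_le_runs.
Qed.

Lemma runs_cat_sorted_perm p g1 g2 r1 r2 m :
  pairwise xle g1 -> perm_eq g1 g2 -> runs r1 <= runs r2 + m ->
  runs (p ++ g1 ++ r1) <= runs (p ++ g2 ++ r2) + (m + 2).
Proof.
move=> hs pg hr; rewrite !catA.
have hg : runs (p ++ g1) <= runs (p ++ g2) + 1.
  apply: leq_trans (runs_cat_le _ _) (leq_trans _ (runs_cat_ge _ _)).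
  by rewrite leq_add2l; apply: runs_pairwise_le_perm pg.
have := runs_cat_ge (p ++ g2) r2; have := runs_cat_le (p ++ g1) r1; lia.
Qed.

End ExtendedAlphabet.

(** * Runs of key-sorted listings *)

Lemma perm_constant_eq (T : eqType) (s t : seq T) : constant s -> perm_eq s t -> s = t.
Proof.
case: s => [|x s] hc p; first by move: (perm_size p) => /= /esym/size0nil ->.
have ha : all (pred1 x) (x :: s) by rewrite /= eqxx.
have hb : all (pred1 x) t.
  by rewrite all_count -(permP p) -(perm_size p) -all_count.
by rewrite (all_pred1P _ _ ha) (all_pred1P _ _ hb) (perm_size p).
Qed.

Section KeyedRuns.
Context {d : Order.disp_t} {A : finOrderType d} {K : eqType} (kle : rel K).
Hypothesis kle_refl : reflexive kle.
Hypothesis kle_anti : antisymmetric kle.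
Local Notation X := (xchar A).
Local Notation entry := (K * X)%type.
Implicit Types (k : K) (ps : seq entry).

Definition key_sorted ps := pairwise (fun p q : entry => kle p.1 q.1) ps.
Definition group ps k := [seq q.2 | q <- ps & q.1 == k].
Definition groups_sorted ps := forall k, pairwise (@xle _ A) (group ps k).
Definition mixed_groups ps :=
  count (fun k => ~~ constant (group ps k)) (undup (map fst ps)).

Lemma key_sorted_split k ps : all (fun q : entry => kle k q.1) ps -> key_sorted ps ->
  ps = [seq q <- ps | q.1 == k] ++ [seq q <- ps | q.1 != k].
Proof.
elim: ps => [|q ps IH] //= /andP[hq ha] /andP[hqa hs].
case: (eqVneq q.1 k) => [e|ne] /=; first by rewrite -IH.
have later_ne r : r \in ps -> r.1 != k.
  move=> rin; apply/eqP => e; case/eqP: ne; apply: kle_anti.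
  by rewrite hq andbT; move/allP: hqa => /(_ r rin); rewrite e.
have -> : [seq q <- ps | q.1 == k] = [::].
  by apply/eqP; rewrite -[_ == _]negbK -has_filter; apply/hasP => -[r /later_ne/negbTE ->].
by congr (_ :: _); apply/esym/all_filterP/allP.
Qed.

Lemma group_filter_neq ps k k' : k' != k ->
  group [seq q <- ps | q.1 != k] k' = group ps k'.
Proof.
move=> ne; rewrite /group -filter_predI; congr map; apply: eq_filter => q /=.
by case: (eqVneq q.1 k') => //= ->; rewrite ne.
Qed.

Lemma group_filter_subseq ps k k' :
  subseq (group [seq q <- ps | q.1 != k] k') (group ps k').
Proof.
rewrite /group -filter_predI; apply: map_subseq.
rewrite (eq_filter (a2 := predI (fun q : entry => q.1 != k) (fun q => q.1 == k'))).
  by rewrite filter_predI filter_subseq.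
by move=> q /=; rewrite andbC.
Qed.

Lemma mixed_groups_filter ps k : k \in map fst ps ->
  mixed_groups ps = ~~ constant (group ps k) + mixed_groups [seq q <- ps | q.1 != k].
Proof.
move=> kin; set R := [seq q <- ps | q.1 != k].
have kR : k \notin map fst R.
  by apply/mapP => -[q]; rewrite mem_filter => /andP[/eqP ne _] e; case: ne.
have pu : perm_eq (undup (map fst ps)) (k :: undup (map fst R)).
  apply: uniq_perm; rewrite /= ?mem_undup ?kR ?undup_uniq // => k'.
  rewrite in_cons !mem_undup; case: (eqVneq k' k) => [->//|ne] /=.
  apply/mapP/mapP => -[q qin e]; exists q => //.
    by rewrite mem_filter qin -e ne.
  by move: qin; rewrite mem_filter => /andP[].
rewrite /mixed_groups (permP pu) /=; congr (_ + _).
apply: eq_in_count => k'; rewrite mem_undup => k'in.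
by rewrite group_filter_neq //; apply: contraNneq kR => <-.
Qed.

Lemma runs_key_sorted_cat p ps1 ps2 :
  key_sorted ps1 -> key_sorted ps2 -> perm_eq ps1 ps2 -> groups_sorted ps1 ->
  runs (p ++ map snd ps1) <= runs (p ++ map snd ps2) + 2 * mixed_groups ps1.
Proof.
move: {2}(size ps1) (leqnn (size ps1)) => n.
elim: n p ps1 ps2 => [|n IH] p [|[k c] ps1'] ps2 //= hn hs1 hs2 pp hg;
  try by move: (perm_size pp) => /= /esym/size0nil ->; rewrite addn0.
set ps1 := (k, c) :: ps1'.
have hall1 : all (fun q : entry => kle k q.1) ps1 by rewrite /= kle_refl; case/andP: hs1.
have {}hs1 : key_sorted ps1 := hs1.
have hall2 : all (fun q : entry => kle k q.1) ps2.
  by apply/allP => q qin; move/allP: hall1; apply; rewrite (perm_mem pp).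
set R1 := [seq q <- ps1 | q.1 != k].
set R2 := [seq q <- ps2 | q.1 != k].
have e1 : map snd ps1 = group ps1 k ++ map snd R1.
  by rewrite {1}(key_sorted_split hall1 hs1) map_cat.
have e2 : map snd ps2 = group ps2 k ++ map snd R2.
  by rewrite {1}(key_sorted_split hall2 hs2) map_cat.
have pG : perm_eq (group ps1 k) (group ps2 k) by apply/perm_map/perm_filter.
have nR1 : size R1 <= n.
  by rewrite /R1 /= eqxx /= size_filter; exact: leq_trans (count_size _ _) hn.
have IHR p' := IH p' R1 R2 nR1 (pairwise_filter _ hs1) (pairwise_filter _ hs2)
  (perm_filter _ pp) (fun k' => subseq_pairwise (group_filter_subseq _ _ _) (hg k')).
rewrite -[c :: _]/(map snd ps1) e1 e2 (@mixed_groups_filter ps1 k (mem_head _ _)) -/ps1 -/R1.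
case: (boolP (constant (group ps1 k))) => hc /=.
- by rewrite -(perm_constant_eq hc pG) !catA add0n; apply: IHR.
- have hR : runs (map snd R1) <= runs (map snd R2) + 2 * mixed_groups R1 := IHR [::].
  apply: leq_trans (runs_cat_sorted_perm p (hg k) pG hR) _.
  by rewrite leq_add2l /= mulnDr muln1 addnC.
Qed.

End KeyedRuns.

(** * Rotations of strings with separators *)

Section SuffixEntries.
Context {d : Order.disp_t} {A : finOrderType d}.
Local Notation X := (xchar A).
Local Notation lift := (@Defs.lift _ A).
Local Notation lex := (@lexle _ A).
Local Notation entry := ((seq A * X) * X)%type.
Implicit Types (x : X) (s t : seq X) (T U V W : seq A) (l M : seq (seq A)).

Definition key_le V W := lexle (dolstr V) (dolstr W).

Lemma key_le_refl : reflexive key_le.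
Proof. by move=> V; apply: lexle_refl. Qed.

Lemma dolstr_inj : injective (@dolstr _ A).
Proof.
move=> V W; rewrite /dolstr !cats1 => /rcons_inj [] /inj_map; apply.
by move=> a b [].
Qed.

Lemma key_le_anti : antisymmetric key_le.
Proof. by move=> V W /lexle_anti /dolstr_inj. Qed.

Lemma prefix_dolstr V W : prefix (dolstr V) (dolstr W) -> V = W.
Proof.
elim: V W => [|a V IH] [|b W] //=.
by case/andP => /eqP [->] /IH ->.
Qed.

Definition is_letter x := if x is Ch _ then true else false.

Fixpoint head_word s : seq A := if s is Ch a :: s' then a :: head_word s' else [::].
Definition head_sep s := nth Hash s (size (head_word s)).

Lemma key_le_nil W : key_le [::] W.
Proof. by case: W. Qed.

Lemma head_word_mono s t : lex s t -> key_le (head_word s) (head_word t).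
Proof.
elim: s t => [|x s IH] t; first by rewrite key_le_nil.
case: x => [|n|a] /=; try by rewrite key_le_nil.
case: t => [|[|m|b] t] //=; rewrite /key_le /= => /orP[->//|/andP[e h]].
by apply/orP; right; rewrite e; exact: IH.
Qed.

Lemma head_sep_mono s t : lex s t -> head_word s = head_word t ->
  xle (head_sep s) (head_sep t).
Proof.
rewrite /head_sep; elim: s t => [|x s IH] t; first by rewrite /= xle_Hash.
case: x => [|n|a] /=; first by rewrite xle_Hash.
- case: t => [|[|m|b] t] //=.
  rewrite /xle /= => /orP[->|/andP[/eqP [->] _]] _; by rewrite ?orbT ?eqxx.
- case: t => [|[|m|b] t] //= /orP[h|/andP[_ h]] [e1 e2]; last exact: IH.
  by move: h; rewrite e1 /= ltxx.
Qed.

Lemma head_word_lift V c s : ~~ is_letter c -> head_word (lift V ++ c :: s) = V.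
Proof. by elim: V => [|a V IH] /=; [case: c | move=> h; rewrite IH]. Qed.

Lemma head_sep_lift V c s : ~~ is_letter c -> head_sep (lift V ++ c :: s) = c.
Proof. by move=> h; rewrite /head_sep head_word_lift // nth_cat size_map ltnn subnn. Qed.

Lemma head_word_cat s t : has (predC is_letter) s -> head_word (s ++ t) = head_word s.
Proof. by elim: s => [|[|n|a] s IH] //= h; rewrite IH. Qed.

Lemma head_sep_cat s t : has (predC is_letter) s -> head_sep (s ++ t) = head_sep s.
Proof.
rewrite /head_sep => h; rewrite head_word_cat // nth_cat.
suff -> : size (head_word s) < size s by [].
by elim: s h => [|[|n|a] s IH] //= h; rewrite ltnS IH.
Qed.

(* A block [(T, c)] stands for the word [T] followed by the separator [c]. *)
Fixpoint blocks_str (bs : seq (seq A * X)) : seq X :=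
  if bs is b :: bs' then lift b.1 ++ b.2 :: blocks_str bs' else [::].

Definition block_entries (b : seq A * X) : seq entry :=
  [seq ((drop k b.1, b.2), prec_char (drop k b.1) b.1) | k <- iota 0 (size b.1).+1].
Definition blocks_entries bs := flatten (map block_entries bs).

(* The renaming [ren] maps every separator to [$]; [prev] is the letter cyclically before [s]. *)
Definition pos_entry (ren : X -> X) (prev : X) s i :=
  ((head_word (drop i s), head_sep (drop i s)),
   ren (if i is j.+1 then nth Hash s j else prev)).

Definition rot_entry (ren : X -> X) s := ((head_word s, head_sep s), ren (last Hash s)).

Definition good_blocks (ren : X -> X) (bs : seq (seq A * X)) :=
  all (fun b : seq A * X => ~~ is_letter b.2 && (ren b.2 == Dol 0)) bs.

Section Renaming.
Variable ren : X -> X.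
Hypothesis ren_Ch : forall a, ren (Ch a) = Ch a.

Lemma prec_char_drop T i s : 0 < i <= size T ->
  prec_char (drop i T) T = nth Hash (lift T ++ s) i.-1.
Proof.
case/andP=> i0 iT; rewrite /prec_char size_drop subKn //.
rewrite -(cat_take_drop i T) /Defs.lift map_cat -catA nth_cat size_map size_take.
have hi : (if i < size T then i else size T) = i by case: ltngtP iT.
rewrite hi prednK // leqnn take_cat size_take hi ltnn subnn take0 cats0.
have : size (take i T) = i by rewrite size_take hi.
case/lastP: (take i T) => [|u a] /=; first by move=> e; rewrite -e in i0.
by rewrite size_rcons => <- /=; rewrite rev_rcons -cats1 map_cat nth_cat size_map ltnn subnn.
Qed.

Lemma ren_nth_lift T s j : j < size T ->
  ren (nth Hash (lift T ++ s) j) = nth Hash (lift T ++ s) j.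
Proof.
move=> jT; rewrite nth_cat size_map jT.
by case: T jT => [//|a T'] jT; rewrite (nth_map a) // ren_Ch.
Qed.

Lemma pos_entry_head prev T c s i : ren prev = Dol 0 -> ~~ is_letter c -> i <= size T ->
  pos_entry ren prev (lift T ++ c :: s) i = ((drop i T, c), prec_char (drop i T) T).
Proof.
move=> hp hc; rewrite /pos_entry drop_cat size_map.
case: ltngtP => // [ilt _ | -> _].
- rewrite -map_drop head_word_lift // head_sep_lift //; congr (_, _).
  case: i ilt => [|j] ilt; first by rewrite hp drop0 /prec_char subnn take0.
  by rewrite (prec_char_drop (c :: s)) ?(ltnW ilt) // ren_nth_lift ?(ltnW ilt).
- rewrite subnn drop0 drop_size /head_sep.
  have -> : head_word (c :: s) = [::] by move: hc; case: (c).
  case eT: (size T) => [|j]; first by move/size0nil: eT => ->; rewrite /= hp.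
  rewrite -[in prec_char _ T](drop_size T) (prec_char_drop (c :: s)) eT ?leqnn //.
  by rewrite ren_nth_lift ?eT.
Qed.

Lemma pos_entry_tail prev T c s j :
  pos_entry ren prev (lift T ++ c :: s) ((size T).+1 + j) = pos_entry ren c s j.
Proof.
have h : ~~ ((size T).+1 + j < size T) by rewrite -leqNgt; lia.
have e : (size T).+1 + j - size T = j.+1 by lia.
rewrite /pos_entry drop_cat size_map (negbTE h) e addSn /=.
have h2 : ~~ (size T + j < size T) by rewrite -leqNgt leq_addr.
by rewrite nth_cat size_map (negbTE h2) addKn; case: j {h e h2}.
Qed.

Lemma pos_entries_blocks prev bs : ren prev = Dol 0 -> good_blocks ren bs ->
  map (pos_entry ren prev (blocks_str bs)) (iota 0 (size (blocks_str bs))) = blocks_entries bs.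
Proof.
elim: bs prev => [|[T c] bs IH] prev // hp /andP[/andP[hc /eqP rc] hbs].
have -> : blocks_entries ((T, c) :: bs) = block_entries (T, c) ++ blocks_entries bs by [].
rewrite [blocks_str _]/= size_cat size_map [size (_ :: _)]/= -addSnnS iotaD map_cat; congr (_ ++ _).
- apply/eq_in_map => i; rewrite mem_iota add0n ltnS => /andP[_ iT].
  exact: pos_entry_head.
- rewrite -(IH c rc hbs) add0n -[in iota _ _](addn0 (size T).+1) iotaDl -map_comp.
  by apply: eq_map => j; rewrite /= pos_entry_tail.
Qed.

Lemma has_nonletter_drop x s i : ~~ is_letter (last x s) -> i < size s ->
  has (predC is_letter) (drop i s).
Proof.
elim: s x i => [|a s IH] x [|i] // h hi; last exact: (IH a).
by rewrite drop0; apply/hasP; exists (last a s); [exact: mem_last|].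
Qed.

Lemma last_take x s j : j < size s -> last x (take j.+1 s) = nth Hash s j.
Proof. by elim: s x j => [|a s IH] x [|j] //= hj; [case: s {IH hj} | rewrite IH]. Qed.

Lemma rot_entry_rot s i : ~~ is_letter (last Hash s) -> i < size s ->
  rot_entry ren (rot i s) = pos_entry ren (last Hash s) s i.
Proof.
move=> hl hi; have hd := has_nonletter_drop hl hi.
rewrite /rot_entry /pos_entry /rot head_word_cat // head_sep_cat //; congr (_, ren _).
case: i hi {hd} => [|j] hj; first by rewrite drop0 take0 cats0.
by rewrite last_cat -(last_take (last Hash (drop j.+1 s)) (ltnW hj)).
Qed.

Lemma last_blocks_str (P : pred X) x bs : P x -> all (fun b : seq A * X => P b.2) bs ->
  P (last x (blocks_str bs)).
Proof.
elim: bs x => [|b bs IH] x //= hx /andP[hb ha].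
by rewrite last_cat /=; apply: IH.
Qed.

Lemma rot_entries_blocks bs : good_blocks ren bs ->
  map (rot_entry ren) (rotations (blocks_str bs)) = blocks_entries bs.
Proof.
case: bs => [|b bs] // hbs.
have /andP[hl /eqP rl] : ~~ is_letter (last Hash (blocks_str (b :: bs))) &&
    (ren (last Hash (blocks_str (b :: bs))) == Dol 0).
  rewrite /= last_cat /=; case/andP: hbs => hb ha.
  exact: (last_blocks_str (P := fun x => ~~ is_letter x && (ren x == Dol 0))).
rewrite -(pos_entries_blocks rl hbs) /rotations -map_comp.
by apply/eq_in_map => i; rewrite mem_iota add0n => hi; apply: rot_entry_rot.
Qed.

End Renaming.

Definition suffix_entries (M : seq (seq A)) : seq (seq A * X) :=
  [seq (drop k T, prec_char (drop k T) T) | T <- M, k <- iota 0 (size T).+1].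

Definition drop_sep (t : entry) := (t.1.1, t.2).

Lemma drop_sep_blocks_entries bs :
  map drop_sep (blocks_entries bs) = suffix_entries (map fst bs).
Proof.
elim: bs => [|b bs IH] //; rewrite /blocks_entries /= map_cat -/(blocks_entries bs) IH.
by rewrite /block_entries -map_comp.
Qed.

Lemma suffix_entries_cat M1 M2 :
  suffix_entries (M1 ++ M2) = suffix_entries M1 ++ suffix_entries M2.
Proof. by rewrite /suffix_entries map_cat flatten_cat. Qed.

Lemma perm_suffix_entries M1 M2 : perm_eq M1 M2 -> perm_eq (suffix_entries M1) (suffix_entries M2).
Proof. by move=> p; apply/perm_flatten/perm_map. Qed.

(** * Separator-based BWTs are key-sorted listings *)

Definition keyed_listing M (L : seq X) := exists ps : seq (seq A * X),
  [/\ L = map snd ps, key_sorted key_le ps & perm_eq ps (suffix_entries M)].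

Lemma keyed_listing_perm l M L : perm_eq l M -> keyed_listing l L -> keyed_listing M L.
Proof.
move=> plM [ps [eL hs hp]]; exists ps; split => //.
exact: perm_trans hp (perm_suffix_entries plM).
Qed.

Lemma key_sorted_rot_entries ren (rs : seq (seq X)) : pairwise lex rs ->
  key_sorted key_le (map (drop_sep \o rot_entry ren) rs).
Proof.
by move=> h; rewrite /key_sorted pairwise_map; apply: sub_pairwise h => ? ? /head_word_mono.
Qed.

Fixpoint sep_blocks l j : seq (seq A * X) :=
  if l is T :: l' then (T, Dol j) :: sep_blocks l' j.+1 else [::].

Lemma mdol_str_blocks l j : mdol_str l j = blocks_str (sep_blocks l j).
Proof. by elim: l j => [|T l IH] j //=; rewrite IH. Qed.

Lemma sep_blocks_fst l j : map fst (sep_blocks l j) = l.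
Proof. by elim: l j => [|T l IH] j //=; rewrite IH. Qed.

Lemma good_sep_blocks l j : good_blocks (@ren_dol _ A) (sep_blocks l j).
Proof. by elim: l j => [|T l IH] j //=; rewrite IH. Qed.

Lemma perm_sort_rotations s : perm_eq (sort lex (rotations s)) (rotations s).
Proof. by rewrite perm_sort perm_refl. Qed.

Lemma perm_rot_entries_mdol l :
  perm_eq (map (rot_entry (@ren_dol _ A)) (sort lex (rotations (mdol_str l 1))))
          (blocks_entries (sep_blocks l 1)).
Proof.
rewrite -(rot_entries_blocks (ren := @ren_dol _ A)) ?good_sep_blocks // -mdol_str_blocks.
exact/perm_map/perm_sort_rotations.
Qed.

Definition mdol_entries l :=
  map (drop_sep \o rot_entry (@ren_dol _ A)) (sort lex (rotations (mdol_str l 1))).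

Lemma mdolBWT_entries l :
  [/\ mdolBWT l = map snd (mdol_entries l), key_sorted key_le (mdol_entries l)
    & perm_eq (mdol_entries l) (suffix_entries l)].
Proof.
split; first by rewrite /mdolBWT /BWT /mdol_entries -!map_comp.
  exact/key_sorted_rot_entries/sort_lexle_pairwise.
rewrite /mdol_entries map_comp -[in suffix_entries l](sep_blocks_fst l 1).
by rewrite -drop_sep_blocks_entries perm_map ?perm_rot_entries_mdol.
Qed.

Lemma mdolBWT_keyed l : keyed_listing l (mdolBWT l).
Proof. by have [*] := mdolBWT_entries l; exists (mdol_entries l). Qed.

(* [#] is the smallest character, so the rotation starting with it sorts first. *)
Lemma sort_rotations_Hash s : Hash \notin s ->
  exists rest, sort lex (rotations (s ++ [:: Hash])) = (Hash :: s) :: rest.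
Proof.
move=> hs; set h := Hash :: s.
have hrot : h \in rotations (s ++ [:: Hash]).
  apply/mapP; exists (size s); last by rewrite rot_size_cat.
  by rewrite mem_iota size_cat addn1 ltnS leqnn.
have hp := perm_sort_rotations (s ++ [:: Hash]).
have hsort := sort_lexle_pairwise (rotations (s ++ [:: Hash])).
case E: (sort lex _) hp hsort => [|x rest] hp hsort.
  by move: (perm_mem hp h); rewrite hrot in_nil.
exists rest; congr (_ :: _); apply/eqP; apply: contraT => ne.
have xin : x \in rotations (s ++ [:: Hash]) by rewrite -(perm_mem hp) mem_head.
have : lex x h.
  move: hsort => /= /andP[/allP hx _]; apply: hx.
  by move: (perm_mem hp h); rewrite hrot in_cons eq_sym (negbTE ne).
case/mapP: xin => i; rewrite mem_iota add0n size_cat addn1 ltnS => /andP[_].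
rewrite leq_eqVlt => /orP[/eqP ->|hi] ex; first by move: ne; rewrite ex rot_size_cat eqxx.
rewrite ex /rot drop_cat hi (drop_nth Hash hi) /= xlt_Hash /=.
by case/andP => /eqP en _; move: hs; rewrite -en mem_nth.
Qed.

Lemma conc_str_blocks l : conc_str l = blocks_str [seq (T, @Dol A 0) | T <- l] ++ [:: Hash].
Proof. by rewrite /conc_str; elim: l => [|T l IH] //=; rewrite -!catA IH. Qed.

Lemma Hash_notin_blocks l : Hash \notin blocks_str [seq (T, @Dol A 0) | T <- l].
Proof.
elim: l => [|T l IH] //=; rewrite mem_cat in_cons negb_or IH andbT /=.
by apply/mapP => -[a _].
Qed.

Lemma blocks_str_cat (b1 b2 : seq (seq A * X)) :
  blocks_str (b1 ++ b2) = blocks_str b1 ++ blocks_str b2.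
Proof. by elim: b1 => [|b b1 IH] //=; rewrite IH -catA. Qed.

Lemma concBWT_keyed l : keyed_listing l (concBWT l).
Proof.
set s0 := blocks_str [seq (T, @Dol A 0) | T <- l].
set f := drop_sep \o rot_entry (@ren_hash _ A).
have [rest E] := sort_rotations_Hash (Hash_notin_blocks l).
have hp := perm_sort_rotations (conc_str l).
have hsort := sort_lexle_pairwise (rotations (conc_str l)).
rewrite conc_str_blocks -/s0 E in hp hsort.
exists (map f rest); split.
- by rewrite /concBWT /BWT conc_str_blocks -/s0 E /= -!map_comp.
- by apply: key_sorted_rot_entries; case/andP: hsort.
have hgood : good_blocks (@ren_hash _ A) ([seq (T, Dol 0) | T <- l] ++ [:: ([::], Hash)]).
  by rewrite /good_blocks all_cat /= andbT all_map; apply/allP.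
have e1 : map f (rotations (s0 ++ [:: Hash])) = suffix_entries l ++ [:: ([::], Dol 0)].
  have -> : s0 ++ [:: Hash] = blocks_str ([seq (T, Dol 0) | T <- l] ++ [:: ([::], Hash)]).
    by rewrite blocks_str_cat.
  rewrite /f map_comp rot_entries_blocks // drop_sep_blocks_entries.
  by rewrite map_cat -map_comp map_id suffix_entries_cat.
have fh : f (Hash :: s0) = ([::], Dol 0).
  rewrite /f /= /rot_entry /=; congr (_, _).
  apply/eqP; apply: (last_blocks_str (P := fun y => ren_hash y == Dol 0)) => //.
  by rewrite all_map; apply/allP.
have := perm_map f hp; rewrite e1 /= fh -cat1s perm_catC => hq.
by rewrite -(perm_cat2r [:: ([::], Dol 0)]).
Qed.

(* Since [$] occurs only at the end of [dolstr V], comparing [dolstr V] with any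
   string never reaches the end of its period, so the omega-order agrees with [key_le]. *)
Lemma omega_lt_key_gt V1 V2 u1 u2 : ~~ key_le V1 V2 ->
  omega_lt (dolstr V2 ++ u2) (dolstr V1 ++ u1).
Proof.
move=> hn; right.
case: (lexle_gt_witness hn) => [/prefix_dolstr e|[n [h1 h2 h3 h4]]].
  by move: hn; rewrite e key_le_refl.
have s1 : n < size (dolstr V1 ++ u1) by rewrite size_cat ltn_addr.
have s2 : n < size (dolstr V2 ++ u2) by rewrite size_cat ltn_addr.
exists n; split.
- move=> m hm; rewrite /oword !modn_small ?(ltn_trans hm) //.
  rewrite (nth_cat Hash (dolstr V2)) (nth_cat Hash (dolstr V1)).
  by rewrite (ltn_trans hm h1) (ltn_trans hm h2) h3.
- by rewrite /oword !modn_small // (nth_cat Hash (dolstr V2)) (nth_cat Hash (dolstr V1)) h1 h2.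
Qed.

Lemma rot_dolstr T k : k <= size T -> rot k (dolstr T) = dolstr (drop k T) ++ lift (take k T).
Proof.
move=> hk; rewrite /rot /dolstr drop_cat take_cat size_map.
case: ltngtP hk => // [hlt|->] _.
- by rewrite -map_drop -map_take -catA.
- by rewrite subnn drop0 take0 cats0 drop_size take_size.
Qed.

Lemma dolstr_rotation_cat R M :
  R \in flatten [seq rotations D | D <- [seq dolstr T | T <- M]] ->
  exists V u, R = dolstr V ++ u.
Proof.
case/flatten_mapP => D /mapP [T _ ->] /mapP [k]; rewrite mem_iota add0n => hk ->.
exists (drop k T), (lift (take k T)); apply: rot_dolstr.
by move: hk; rewrite /dolstr size_cat size_map addn1 ltnS.
Qed.

Lemma rot_entries_dolstr M :
  map (drop_sep \o rot_entry id) (flatten [seq rotations D | D <- [seq dolstr T | T <- M]])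
  = suffix_entries M.
Proof.
elim: M => [|T M IH] //=; rewrite map_cat IH; congr (_ ++ _).
rewrite map_comp -[dolstr T]/(blocks_str [:: (T, Dol 0)]) rot_entries_blocks //=.
by rewrite cats0 -map_comp.
Qed.

Lemma dolEBWT_keyed M L : is_dolEBWT M L -> keyed_listing M L.
Proof.
case=> rs [hperm [hsort ->]].
have hform i : i < size rs -> exists V u, nth [::] rs i = dolstr V ++ u.
  by move=> hi; apply: (dolstr_rotation_cat (M := M)); rewrite -(perm_mem hperm) mem_nth.
exists (map (drop_sep \o rot_entry id) rs); split.
- by rewrite -map_comp.
- rewrite /key_sorted pairwise_map; apply/(pairwiseP [::]) => i j; rewrite !inE => hi hj hij.
  have [V1 [u1 e1]] := hform i hi; have [V2 [u2 e2]] := hform j hj.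
  apply: contraT; rewrite /= /rot_entry /= e1 e2 /dolstr -!catA !head_word_lift // => hn.
  by case: (hsort i j); [rewrite hij hj | rewrite e1 e2; exact: omega_lt_key_gt].
- by rewrite -rot_entries_dolstr perm_map.
Qed.

Lemma sepBWT_keyed M L : sepBWT M L -> keyed_listing M L.
Proof.
case=> [/dolEBWT_keyed //|[] [l [plM ->]]].
- exact: keyed_listing_perm plM (mdolBWT_keyed l).
- exact: keyed_listing_perm plM (concBWT_keyed l).
Qed.

(** * The colexicographic listing *)

Fixpoint key_hits l j V : seq entry :=
  if l is T :: l' then
    (if suffix V T then [:: ((V, Dol j), prec_char V T)] else [::]) ++ key_hits l' j.+1 V
  else [::].

Lemma filter_iota_drop T V :
  [seq k <- iota 0 (size T).+1 | drop k T == V] =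
  if suffix V T then [:: size T - size V] else [::].
Proof.
have e : {in iota 0 (size T).+1, (fun k => drop k T == V) =1
          (fun k => (k == size T - size V) && suffix V T)}.
  move=> k; rewrite mem_iota add0n ltnS => /= hk.
  rewrite suffixE; apply/eqP/andP => [<-|[/eqP -> /eqP //]].
  by rewrite size_drop subKn // eqxx.
rewrite (eq_in_filter e); case: ifP => hs.
- rewrite (eq_filter (a2 := pred1 (size T - size V))); last by move=> k /=; rewrite andbT.
  by apply: filter_pred1_uniq; rewrite ?iota_uniq // mem_iota add0n ltnS leq_subr.
- by rewrite (eq_filter (a2 := pred0)) ?filter_pred0 // => k /=; rewrite andbF.
Qed.

Lemma block_entries_key T c V : [seq t <- block_entries (T, c) | t.1.1 == V] =
  if suffix V T then [:: ((V, c), prec_char V T)] else [::].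
Proof.
rewrite /block_entries filter_map.
rewrite (eq_filter (a2 := fun k => drop k T == V)) // filter_iota_drop.
by case: ifP => //= hs; move: hs; rewrite suffixE => /eqP ->.
Qed.

Lemma sep_blocks_entries_key l j V :
  [seq t <- blocks_entries (sep_blocks l j) | t.1.1 == V] = key_hits l j V.
Proof.
elim: l j => [|T l IH] j //.
have -> : blocks_entries (sep_blocks (T :: l) j) =
  block_entries (T, Dol j) ++ blocks_entries (sep_blocks l j.+1) by [].
by rewrite filter_cat block_entries_key IH.
Qed.

Lemma key_hits_sorted l j V : pairwise (fun t1 t2 : entry => xlt t1.1.2 t2.1.2) (key_hits l j V).
Proof.
have hits_gt l' i j' : i < j' -> all (fun t : entry => xlt (Dol i) t.1.2) (key_hits l' j' V).
  elim: l' j' => [|T l' IH] j' //= hij; rewrite all_cat IH ?andbT ?(ltn_trans hij) //.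
  by case: ifP => //= _; rewrite hij.
elim: l j => [|T l IH] j //=; rewrite pairwise_cat IH andbT.
by case: ifP => //= _; rewrite andbT allrel1l hits_gt.
Qed.

Lemma key_hits_snd l j V : map snd (key_hits l j V) = [seq prec_char V T | T <- l & suffix V T].
Proof. by elim: l j => [|T l IH] j //=; rewrite map_cat IH; case: ifP. Qed.

(* Rotations with head word [V] are ordered by their separators [$_j], i.e. in listing order. *)
Lemma mdol_entries_group l V :
  group (mdol_entries l) V = [seq prec_char V T | T <- l & suffix V T].
Proof.
set rs := sort lex (rotations (mdol_str l 1)).
set tV := [seq t <- map (rot_entry (@ren_dol _ A)) rs | t.1.1 == V].
have -> : group (mdol_entries l) V = map snd tV.
  by rewrite /group /mdol_entries map_comp filter_map -map_comp.
have htV : perm_eq tV (key_hits l 1 V).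
  by rewrite -sep_blocks_entries_key; apply/perm_filter/perm_rot_entries_mdol.
have sorted_le : pairwise (fun t1 t2 : entry => xle t1.1.2 t2.1.2) tV.
  have h : pairwise (fun t1 t2 : entry => (t1.1.1 == t2.1.1) ==> xle t1.1.2 t2.1.2) tV.
    apply/pairwise_filter; rewrite pairwise_map.
    apply: sub_pairwise (sort_lexle_pairwise _) => R1 R2 h.
    by apply/implyP => /eqP; apply: head_sep_mono.
  apply: (sub_in_pairwise (P := fun t : entry => t.1.1 == V)) h.
    by move=> t1 t2 /eqP -> /eqP ->; rewrite eqxx.
  by apply/allP => t; rewrite mem_filter => /andP[].
have hu : uniq (map (fun t : entry => t.1.2) tV).
  rewrite (perm_uniq (perm_map _ htV)).
  apply: (@pairwise_uniq _ (@xlt _ A)); first by move=> x; rewrite xlt_irr.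
  by rewrite pairwise_map; apply: key_hits_sorted.
have -> : tV = key_hits l 1 V.
  apply: (@irr_sorted_eq _ (fun t1 t2 : entry => xlt t1.1.2 t2.1.2)).
  - by move=> y x z; apply: xlt_trans.
  - by move=> x; rewrite /= xlt_irr.
  - exact/pairwise_sorted/pairwise_xle_xlt.
  - exact/pairwise_sorted/key_hits_sorted.
  - exact: perm_mem.
exact: key_hits_snd.
Qed.

Lemma prec_char_colex_mono V T1 T2 : suffix V T1 -> suffix V T2 -> colexle T1 T2 ->
  xle (prec_char V T1) (prec_char V T2).
Proof.
move=> /suffixP [X1 ->] /suffixP [X2 ->].
rewrite /colexle /prec_char !size_cat !addnK !take_size_cat //.
rewrite /Defs.lift !map_cat !rev_cat lexle_catl -!map_rev.
case: (rev X1) => [|a Y1]; case: (rev X2) => [|b Y2] //=.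
rewrite /xle /= => /orP[->|/andP[/eqP [->] _]]; by rewrite ?orbT ?eqxx.
Qed.

Lemma colex_groups_sorted M : groups_sorted (mdol_entries (sort (@colexle _ A) M)).
Proof.
move=> V; rewrite mdol_entries_group pairwise_map.
have hp : pairwise (@colexle _ A) (sort (@colexle _ A) M).
  rewrite -sorted_pairwise; first exact: (sort_sorted (fun T1 T2 => lexle_total _ _)).
  by move=> T1 T2 T3; apply: lexle_trans.
apply: (@sub_in_pairwise _ (suffix V) (@colexle _ A)).
- by move=> T1 T2 h1 h2; apply: prec_char_colex_mono.
- by apply/allP => T; rewrite mem_filter => /andP[].
- exact: pairwise_filter.
Qed.

(** * Mixed groups are interesting intervals *)

Lemma count_lt_subpred (Y : eqType) (p q : pred Y) (s : seq Y) (x : Y) :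
  subpred p q -> x \in s -> q x -> ~~ p x -> count p s < count q s.
Proof.
move=> hpq; elim: s => [|y s IH] //; rewrite in_cons => /orP[/eqP <-|xs] hq hp /=.
- by rewrite (negbTE hp) hq add0n add1n ltnS sub_count.
- have := IH xs hq hp; have : p y <= q y by case: (p y) (hpq y) => // ->.
  lia.
Qed.

(* The rotation [U1 $ ...] of a string with suffix [U1] is counted in [int_b M U2] only. *)
Lemma int_b_lt M U1 U2 : key_le U1 U2 -> U1 != U2 -> has (suffix U1) M ->
  int_b M U1 < int_b M U2.
Proof.
move=> hle hne /hasP [T TM hs]; rewrite /int_b ltnS.
have hne' : dolstr U1 != dolstr U2 by apply: contra_neq hne; apply: dolstr_inj.
have hnp : ~~ prefix (dolstr U1) (dolstr U2).
  by apply: contra hne => /prefix_dolstr ->.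
set k := size T - size U1.
have eR : rot k (dolstr T) = dolstr U1 ++ lift (take k T).
  by rewrite rot_dolstr ?leq_subr // (eqP (etrans (esym (suffixE U1 T)) hs)).
apply: (count_lt_subpred (x := rot k (dolstr T))).
- move=> R /andP[/andP[h1 h2] h3]; apply/andP; split; last first.
    apply: contra h3 => /prefix_lexle h4; exfalso; move/negP: hne'; apply.
    by apply/eqP/lexle_anti/andP; split; [exact: hle | exact: lexle_trans h4 h1].
  rewrite /lexlt (lexle_trans h1 hle) /=; apply: contra_neq hne' => eR2.
  by apply/lexle_anti/andP; split; [exact: hle | rewrite -eR2].
- apply/flatten_mapP; exists T => //; apply/mapP; exists k => //.
  by rewrite mem_iota add0n /dolstr size_cat size_map addn1 ltnS leq_subr.
- rewrite eR; have /andP[h1 h2] := lexle_cat_nprefix (lift (take k T)) hle hnp.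
  rewrite /lexlt h1 h2 andbT /=; apply: contra hnp => /eqP <-.
  exact: prefix_prefix.
- by rewrite eR /lexlt prefix_prefix andbF.
Qed.

Lemma group_suffix_entries M V :
  group (suffix_entries M) V = [seq prec_char V T | T <- M & suffix V T].
Proof.
elim: M => [|T M IH] //.
have -> : suffix_entries (T :: M) = map drop_sep (block_entries (T, Dol 0)) ++ suffix_entries M.
  by rewrite /block_entries -map_comp.
rewrite /group filter_cat map_cat -/(group (suffix_entries M) V) IH filter_map -map_comp.
rewrite (eq_filter (a2 := fun t : entry => t.1.1 == V)) // block_entries_key.
by rewrite /=; case: ifP.
Qed.

Lemma interesting_of_mixed M V :
  ~~ constant [seq prec_char V T | T <- M & suffix V T] -> interestingU M V.
Proof.
set s := [seq prec_char V T | T <- M & suffix V T].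
move=> hc; have [x [y [xs ys nxy]]] : exists x y, [/\ x \in s, y \in s & x != y].
  case: s hc => [|a s'] //= /allPn [y ys hy]; exists a, y.
  by rewrite mem_head in_cons ys orbT eq_sym.
case/mapP: xs => T1; rewrite mem_filter => /andP[s1 T1M] ex.
case/mapP: ys => T2; rewrite mem_filter => /andP[s2 T2M] ey.
have nT : T1 != T2 by apply: contra_neq nxy => e; rewrite ex ey e.
apply/andP; split.
- rewrite -size_filter; apply: (@leq_trans (size [:: T1; T2])) => //.
  apply: uniq_leq_size; first by rewrite /= inE nT.
  by move=> T; rewrite !inE mem_filter => /orP[/eqP->|/eqP->]; rewrite ?s1 ?s2 ?T1M ?T2M.
- have i1 : index T1 M < size M by rewrite index_mem.
  have i2 : index T2 M < size M by rewrite index_mem.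
  apply/existsP; exists (Ordinal i1); apply/existsP; exists (Ordinal i2).
  rewrite /= !nth_index // s1 s2 -ex -ey nxy !andbT.
  apply/negP => /eqP /(congr1 val) /= e.
  by move: nT; rewrite -(nth_index [::] T1M) e nth_index // eqxx.
Qed.

Lemma suffix_entries_keys M : map fst (suffix_entries M) =
  flatten [seq [seq drop k T | k <- iota 0 (size T).+1] | T <- M].
Proof. by elim: M => [|T M IH] //=; rewrite map_cat IH -map_comp. Qed.

Lemma uniq_interesting_int_b M :
  uniq [seq int_b M U | U <- cands M & interestingU M U].
Proof.
rewrite map_inj_in_uniq ?filter_uniq ?undup_uniq //.
move=> U1 U2; rewrite !mem_filter => /andP[/andP[c1 _] _] /andP[/andP[c2 _] _] e.
apply/eqP; apply: contraT => ne.
have hs1 : has (suffix U1) M by rewrite has_count (ltn_trans _ c1).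
have hs2 : has (suffix U2) M by rewrite has_count (ltn_trans _ c2).
case/orP: (lexle_total (dolstr U1) (dolstr U2)) => h.
- by have := int_b_lt h ne hs1; rewrite e ltnn.
- by rewrite eq_sym in ne; have := int_b_lt h ne hs2; rewrite e ltnn.
Qed.

Lemma mixed_groups_le_c_M M ps : perm_eq ps (suffix_entries M) -> mixed_groups ps <= c_M M.
Proof.
move=> pp.
have keys : perm_eq (undup (map fst ps)) (cands M).
  apply: uniq_perm; rewrite ?undup_uniq // => V.
  by rewrite /cands !mem_undup -suffix_entries_keys (perm_mem (perm_map fst pp)).
rewrite /mixed_groups (permP keys).
apply: (@leq_trans (count (interestingU M) (cands M))).
  apply: sub_count => V /= hmix; apply: interesting_of_mixed.
  rewrite -group_suffix_entries; apply: contra hmix => hc.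
  have pp' : perm_eq (suffix_entries M) ps by rewrite perm_sym.
  by rewrite /group -(perm_constant_eq hc (perm_map _ (perm_filter _ pp'))).
rewrite /c_M undup_id; first by rewrite size_map size_filter.
by apply: (@map_uniq _ _ fst); rewrite -map_comp; apply: uniq_interesting_int_b.
Qed.

End SuffixEntries.

Theorem proposition2 (d : Order.disp_t) (A : finOrderType d)
  (M : seq (seq A)) (L' : seq (xchar A)) :
  sepBWT M L' -> (runs (colexBWT M) <= runs L' + 2 * c_M M)%N.
Proof.
move=> /sepBWT_keyed [ps [-> sorted_ps perm_ps]].
rewrite /colexBWT; set l := sort (@colexle _ A) M.
have [-> sorted_l perm_l] := mdolBWT_entries l.
have perm_lM : perm_eq (suffix_entries l) (suffix_entries M).
  by apply: perm_suffix_entries; rewrite perm_sort perm_refl.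
have perm_l_ps : perm_eq (mdol_entries l) ps.
  by apply: perm_trans perm_l (perm_trans perm_lM _); rewrite perm_sym.
have := runs_key_sorted_cat key_le_refl key_le_anti [::] sorted_l sorted_ps perm_l_ps
  (colex_groups_sorted M).
move=> /leq_trans; apply; rewrite leq_add2l leq_mul2l.
by rewrite (mixed_groups_le_c_M (perm_trans perm_l perm_lM)) orbT.
Qed.
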